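(* Let $S$ be a commutative ring, $\delta\in S$, and $r,s\ge0$. (1) If $r\ge1$, then $B_{r,s+1}(S,\delta)\,e_{1,r+s+1}=\iota(B_{r,s}(S,\delta))\,e_{1,r+s+1}$. (2) If $s\ge1$, then $B_{r+1,s}(S,\delta)\,e_{1,r+s+1}=\iota'(B_{r,s}(S,\delta))\,e_{1,r+s+1}$.
   Context: Brauer diagrams and the Brauer algebra $B_m(S,\delta)$: an $(m,m)$-Brauer diagram is a perfect matching of top points $\mathbf p_1,\dots,\mathbf p_m$ and bottom points $\bar{\mathbf p}_1,\dots,\bar{\mathbf p}_m$; $B_m(S,\delta)$ is the free $S$-module on such diagrams with product $ab=\delta^kc$, $c$ obtained by stacking $b$ over $a$ and deleting the $k$ closed loops formed. The walled Brauer algebra $B_{r,s}(S,\delta)\subseteq B_{r+s}(S,\delta)$ is the span of those diagrams in which, calling the points with index $\le r$ ''left'' and the others ''right'', no strand joins a top and a bottom point on different sides, and every strand joining two top points or two bottom points joins a left point with a right point. $\iota:B_{r,s}\to B_{r,s+1}$ adds a strand joining $\mathbf p_{r+s+1}$ and $\bar{\mathbf p}_{r+s+1}$; $\iota':B_{r,s}\to B_{r+1,s}$ adds a new leftmost strand joining new points $\mathbf p_1,\bar{\mathbf p}_1$ (shifting the indices of all other points by $1$). $e_{a,b}$ denotes the Brauer diagram joining $\mathbf p_a$ with $\mathbf p_b$, $\bar{\mathbf p}_a$ with $\bar{\mathbf p}_b$, and $\mathbf p_j$ with $\bar{\mathbf p}_j$ for all $j\ne a,b$. *)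

From HB Require Import structures.
From mathcomp Require Import all_boot all_order all_algebra.
Set Implicit Arguments. Unset Strict Implicit. Unset Printing Implicit Defensive.
Import GRing.Theory.
Local Open Scope ring_scope.

(* Points of an (m,m)-diagram: inl i = top point p_{i+1}, inr i = bottom point
   \bar p_{i+1} (0-indexed). *)
Definition Pt (m : nat) : finType := ('I_m + 'I_m)%type.

(* A candidate diagram: a function on points (the partner map). *)
Definition diagT (m : nat) : finType := {ffun Pt m -> Pt m}.

(* Brauer diagram = perfect matching = fixed-point-free involution. *)
Definition is_diag m (d : diagT m) : bool :=
  [forall x, (d (d x) == x) && (d x != x)].

Definition idx m (p : Pt m) : 'I_m := match p with inl i => i | inr i => i end.
Definition is_top m (p : Pt m) : bool := if p is inl _ then true else false.
Definition with_idx m n (p : Pt m) (i : 'I_n) : Pt n :=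
  if p is inl _ then inl i else inr i.
Definition flip m (p : Pt m) : Pt m :=
  match p with inl i => inr i | inr i => inl i end.

(* ---- stacking b over a (b on top; bottom of b glued to top of a) ---- *)
(* walk fuel down j : we are at middle point j; if down, next follow a from
   the top point j of a; otherwise follow b from bottom point j of b. *)
Fixpoint walk m (b a : diagT m) (fuel : nat) (down : bool) (j : 'I_m) : Pt m :=
  match fuel with
  | 0 => inl j (* unreachable with enough fuel *)
  | fuel'.+1 =>
    if down then
      match a (inl j) with
      | inr k => inr k
      | inl j' => walk b a fuel' false j'
      end
    else
      match b (inr j) with
      | inl k => inl k
      | inr j' => walk b a fuel' true j'
      end
  end.

Definition stack m (b a : diagT m) : diagT m :=
  [ffun p => match p with
    | inl i => match b (inl i) with
               | inl k => inl k
               | inr j => walk b a (2 * m).+2 true j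
               end
    | inr i => match a (inr i) with
               | inr k => inr k
               | inl j => walk b a (2 * m).+2 false j
               end
    end].

Definition mid_rel m (b a : diagT m) : rel 'I_m :=
  fun j j' => (a (inl j) == inl j') || (b (inr j) == inr j').
Definition interior m (b a : diagT m) (j : 'I_m) : bool :=
  is_top (a (inl j)) && ~~ is_top (b (inr j)).
(* number of closed loops: connected components of middle points all of whose
   points are interior, counted via their minimal element *)
Definition loops m (b a : diagT m) : nat :=
  #|[set j : 'I_m | [forall j', connect (mid_rel b a) j j' ==>
                                (interior b a j' && (j <= j')%N)]]|.

Definition balg (S : comPzRingType) m := {ffun diagT m -> S}.

Definition in_Brauer (S : comPzRingType) m (x : balg S m) : Prop :=
  forall d, x d != 0 -> is_diag d.

(* product: a b = delta^k c, c = stack b over a, extended bilinearly *)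
Definition bmul (S : comPzRingType) (delta : S) m (x y : balg S m) : balg S m :=
  [ffun c => \sum_(a | is_diag a) \sum_(b | is_diag b)
      x a * y b * delta ^+ loops b a * (stack b a == c)%:R].

Definition basis (S : comPzRingType) m (d : diagT m) : balg S m :=
  [ffun d' => (d' == d)%:R].

(* walled condition: left points are those with (0-based) index < r *)
Definition walled m (r : nat) (d : diagT m) : bool :=
  [forall p, if is_top p == is_top (d p)
             then ((idx p < r)%N != (idx (d p) < r)%N)
             else ((idx p < r)%N == (idx (d p) < r)%N)].

(* B_{r,s} sits inside B_{r+s}; we take m = r + s and record r *)
Definition in_walled (S : comPzRingType) (r m : nat) (x : balg S m) : Prop :=
  forall d, x d != 0 -> is_diag d && walled r d.

Definition mapP m n (f : 'I_m -> 'I_n) (p : Pt m) : Pt n :=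
  match p with inl i => inl (f i) | inr i => inr (f i) end.

(* iota: new rightmost strand p_{m+1} -- \bar p_{m+1} *)
Definition iota_d m (d : diagT m) : diagT m.+1 :=
  [ffun p => if unlift ord_max (idx p) is Some i
             then mapP (lift ord_max) (d (with_idx p i)) else flip p].
(* iota': new leftmost strand, other indices shifted by one *)
Definition iota'_d m (d : diagT m) : diagT m.+1 :=
  [ffun p => if unlift ord0 (idx p) is Some i
             then mapP (lift ord0) (d (with_idx p i)) else flip p].

Definition iota_alg (S : comPzRingType) m (x : balg S m) : balg S m.+1 :=
  [ffun c => \sum_(d | iota_d d == c) x d].
Definition iota'_alg (S : comPzRingType) m (x : balg S m) : balg S m.+1 :=
  [ffun c => \sum_(d | iota'_d d == c) x d].

(* e_{a,b} (0-indexed a b) *)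
Definition e_d m (a b : 'I_m) : diagT m :=
  [ffun p => if idx p == a then with_idx p b
             else if idx p == b then with_idx p a else flip p].

(* Multiplying walled Brauer diagrams on the right by e = e_{c0,c1}.

   Stacking e over a diagram a joins the top points c0, c1 by e's upper cap;
   every other point p ends where the strand of a from p ends, except that a
   strand reaching the top of a at c0 (resp. c1) turns around e's lower cap
   and continues along a from c1 (resp. c0) [stack_e].  So a e only depends on
   this "contraction" D of a, a fixed-point-free involution of the points other
   than the tops of c0, c1.  Conversely any such D is the contraction of a
   diagram in which c1 is a straight vertical strand [straighten], and such a
   diagram is the insertion of a strand at c1 into a diagram on one point fewer
   [restrict].  Everything respects a wall (a colouring V of the indices) as
   soon as c0 and c1 lie on different sides of it.  Grouping the diagrams of
   x by the diagram so obtained (closed loops only rescale coefficients, and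
   a straight strand at c1 creates none) rewrites x e as (insert y) e, which is
   the general factorization [factor_through_insert]; the two parts of the
   theorem are its instances for the insertion at the last point (iota, with
   e_{1,r+s+1}) and at the first point (iota', with e_{r+s+1,1} = e_{1,r+s+1}). *)

From Pilot Require Import Defs.
From mathcomp Require Import all_boot all_order all_algebra.
Set Implicit Arguments. Unset Strict Implicit. Unset Printing Implicit Defensive.
Import GRing.Theory.
Local Open Scope ring_scope.

Section DiagramFacts.
Variables (m : nat) (d : diagT m).
Hypothesis dd : is_diag d.

Lemma diagK : involutive d.
Proof. by move: dd => /forallP H p; case/andP: (H p) => /eqP. Qed.

Lemma diagN p : d p != p.
Proof. by move: dd => /forallP H; case/andP: (H p). Qed.

Lemma diag_inj : injective d.
Proof. exact: inv_inj diagK. Qed.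

End DiagramFacts.

Lemma is_diagP m (d : diagT m) : involutive d -> (forall p, d p != p) -> is_diag d.
Proof. by move=> dK dN; apply/forallP => p; rewrite dK eqxx dN. Qed.

Lemma inl_eq m (i j : 'I_m) : (inl i == inl j :> Pt m) = (i == j).
Proof. by apply/eqP/eqP => [[]|->]. Qed.

Lemma inr_eq m (i j : 'I_m) : (inr i == inr j :> Pt m) = (i == j).
Proof. by apply/eqP/eqP => [[]|->]. Qed.

Section CapDiagram.
Variables (m : nat) (c0 c1 : 'I_m).
Hypothesis c01 : c0 != c1.
Local Notation e := (e_d c0 c1).

Lemma e_top0 : e (inl c0) = inl c1. Proof. by rewrite ffunE /= eqxx. Qed.
Lemma e_top1 : e (inl c1) = inl c0.
Proof. by rewrite ffunE /= eq_sym (negbTE c01) eqxx. Qed.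
Lemma e_bot0 : e (inr c0) = inr c1. Proof. by rewrite ffunE /= eqxx. Qed.
Lemma e_bot1 : e (inr c1) = inr c0.
Proof. by rewrite ffunE /= eq_sym (negbTE c01) eqxx. Qed.
Lemma e_top i : i != c0 -> i != c1 -> e (inl i) = inr i.
Proof. by move=> /negbTE i0 /negbTE i1; rewrite ffunE /= i0 i1. Qed.
Lemma e_bot i : i != c0 -> i != c1 -> e (inr i) = inl i.
Proof. by move=> /negbTE i0 /negbTE i1; rewrite ffunE /= i0 i1. Qed.

Lemma e_diag : is_diag e.
Proof.
have c10 : c1 != c0 by rewrite eq_sym.
apply: is_diagP => [[] i|[] i];
  (case: (eqVneq i c0) => [->|i0]; last case: (eqVneq i c1) => [->|i1]);
  by rewrite ?(e_top0, e_top1, e_bot0, e_bot1) ?inl_eq ?inr_eq //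
             ?e_top ?e_bot ?e_top.
Qed.

Lemma e_cap j j' : e (inr j) = inr j' ->
  (j == c0) && (j' == c1) || (j == c1) && (j' == c0).
Proof.
case: (eqVneq j c0) => [->|j0]; first by rewrite e_bot0 => -[->]; rewrite !eqxx.
case: (eqVneq j c1) => [->|j1]; first by rewrite e_bot1 => -[->]; rewrite !eqxx orbT.
by rewrite e_bot.
Qed.

End CapDiagram.

Lemma e_sym m (a b : 'I_m) : a != b -> e_d a b = e_d b a.
Proof.
move=> ab; apply/ffunP => p; rewrite !ffunE.
by case: (eqVneq (idx p) a) => // ->; rewrite (negbTE ab).
Qed.

Section StackCap.
Variables (m : nat) (c0 c1 : 'I_m).
Hypothesis c01 : c0 != c1.
Local Notation e := (e_d c0 c1).

(* A strand arriving at the top point q of a continues through e: straight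
   out of e, or around e's lower cap and down again along a. *)
Definition pass_cup (a : diagT m) (q : Pt m) : Pt m :=
  if q is inl j then
    match e (inr j) with inr j' => a (inl j') | q' => q' end
  else q.

(* The partner of p in the stack of e over a, away from the upper cap. *)
Definition contract (a : diagT m) (p : Pt m) : Pt m := pass_cup a (a p).

Lemma pass_cup0 (a : diagT m) : pass_cup a (inl c0) = a (inl c1).
Proof. by rewrite /= e_bot0. Qed.

Lemma pass_cup1 (a : diagT m) : pass_cup a (inl c1) = a (inl c0).
Proof. by rewrite /= e_bot1. Qed.

Lemma pass_cup_id (a : diagT m) q : q != inl c0 -> q != inl c1 -> pass_cup a q = q.
Proof. by case: q => //= j; rewrite !inl_eq => j0 j1; rewrite e_bot. Qed.

(* The walk of [stack] from a point p outside the upper cap of e ends at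
   [contract a p]: it bounces at most once, on the lower cap of e. *)
Lemma walk_exit (a : diagT m) p k : is_diag a -> p != inl c0 -> p != inl c1 ->
  match a p with
  | inr q => inr q
  | inl j => walk e a k.+3 false j
  end = contract a p.
Proof.
move=> da p0 p1; rewrite /contract; case Ha: (a p) => [j|q] //=.
case Ej: (e (inr j)) => [q|j'] //=; case Hb: (a (inl j')) => [j''|q] //=.
have j''j' : j'' != j' by rewrite -inl_eq -Hb diagN.
have pj' : p != inl j'.
  by case/orP: (e_cap c01 Ej) => /andP[_ /eqP ->].
have j''j : j'' != j.
  by apply: contraNneq pj' => Ej''; apply/eqP/(diag_inj da); rewrite Ha Hb Ej''.
by case/orP: (e_cap c01 Ej) => /andP[/eqP ? /eqP ?]; subst j j'; rewrite e_bot.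
Qed.

Lemma stack_e (a : diagT m) : is_diag a -> forall p, stack e a p =
  if p == inl c0 then inl c1 else if p == inl c1 then inl c0 else contract a p.
Proof.
move=> da p; rewrite ffunE.
have [k ->] : exists k, (2 * m).+2 = k.+4.
  by exists (2 * m.-1); rewrite -[in LHS](ltn_predK (ltn_ord c0)) mulnS.
case: p => i; last by rewrite walk_exit.
rewrite !inl_eq; case: (eqVneq i c0) => [->|i0]; first by rewrite e_top0.
case: (eqVneq i c1) => [->|i1]; first by rewrite e_top1.
by rewrite e_top //= -/(walk e a k.+3 false) walk_exit ?inl_eq.
Qed.

Lemma no_loops (a : diagT m) : a (inl c1) = inr c1 -> loops e a = 0%N.
Proof.
move=> a1; apply/eqP; rewrite cards_eq0; apply/eqP/setP => j; rewrite !inE.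
apply/negbTE/negP => /forallP all_int.
have not_int1 : interior e a c1 = false by rewrite /interior a1.
have conn01 : connect (mid_rel e a) c0 c1.
  by apply: connect1; rewrite /mid_rel e_bot0 eqxx orbT.
case: (eqVneq j c0) => [Ej|j0].
  by move/implyP: (all_int c1); rewrite not_int1 Ej conn01 => /(_ isT).
case: (eqVneq j c1) => [Ej|j1].
  by move/implyP: (all_int c1); rewrite not_int1 Ej connect0 => /(_ isT).
by move/implyP: (all_int j); rewrite connect0 /interior e_bot //= andbF => /(_ isT).
Qed.
End StackCap.

(* A colouring V of the indices (left/right of the wall).  A diagram respects V
   when a strand joining two points of the same row crosses the wall while a
   strand joining the two rows does not; for V = (< r) this is [walled r]. *)
Definition respects m (V : pred 'I_m) (d : diagT m) : bool :=
  [forall p, if is_top p == is_top (d p) then V (idx p) != V (idx (d p))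
             else V (idx p) == V (idx (d p))].

(* Equivalently: colour each point by V, flipped on the top row; every strand
   then joins points of different colours. *)
Definition colour m (V : pred 'I_m) (p : Pt m) : bool := V (idx p) (+) is_top p.

Lemma respectsE m (V : pred 'I_m) (d : diagT m) :
  respects V d = [forall p, colour V (d p) != colour V p].
Proof.
apply: eq_forallb => p; rewrite /colour.
by case: (is_top p); case: (is_top (d p)); case: (V (idx p)); case: (V (idx (d p))).
Qed.

Lemma respectsP m (V : pred 'I_m) (d : diagT m) :
  respects V d -> forall p, colour V (d p) != colour V p.
Proof. by rewrite respectsE => /forallP. Qed.

(* Inserting a vertical strand at position c (iota for c = ord_max, iota'
   for c = ord0), and its inverse on diagrams having such a strand. *)
Section InsertStrand.
Variables (n : nat) (c : 'I_n.+1).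
Local Notation lift_pt := (Defs.mapP (lift c)).

Definition insert_strand (d : diagT n) : diagT n.+1 :=
  [ffun p => if unlift c (idx p) is Some i
             then lift_pt (d (with_idx p i)) else flip p].

Lemma insert_lift d P : insert_strand d (lift_pt P) = lift_pt (d P).
Proof. by case: P => i; rewrite ffunE /= liftK. Qed.

Lemma insert_top d : insert_strand d (inl c) = inr c.
Proof. by rewrite ffunE /= unlift_none. Qed.

Lemma insert_bot d : insert_strand d (inr c) = inl c.
Proof. by rewrite ffunE /= unlift_none. Qed.

Lemma pt_cases (p : Pt n.+1) :
  [\/ p = inl c, p = inr c | exists P, p = lift_pt P].
Proof.
case: p => i; case: (unliftP c i) => [j ->|->].
- by apply: Or33; exists (inl j).
- exact: Or31.
- by apply: Or33; exists (inr j).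
- exact: Or32.
Qed.

Lemma lift_pt_inj : injective lift_pt.
Proof. by case=> i [] j //= [] /(congr1 (unbump c)); rewrite !bumpK => /val_inj ->. Qed.

Lemma lift_pt_top P : (lift_pt P == inl c) = false.
Proof. by case: P => i //=; rewrite inl_eq eq_sym (negbTE (neq_lift _ _)). Qed.

Lemma lift_pt_bot P : (lift_pt P == inr c) = false.
Proof. by case: P => i //=; rewrite inr_eq eq_sym (negbTE (neq_lift _ _)). Qed.

Lemma insert_diag d : is_diag d -> is_diag (insert_strand d).
Proof.
move=> dd; apply: is_diagP => p; case: (pt_cases p) => [->|->|[P ->]].
- by rewrite insert_top insert_bot.
- by rewrite insert_bot insert_top.
- by rewrite !insert_lift diagK.
- by rewrite insert_top.
- by rewrite insert_bot.
- by rewrite insert_lift (inj_eq lift_pt_inj) diagN.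
Qed.

Variables (W : pred 'I_n.+1) (W' : pred 'I_n).
Hypothesis W_lift : forall i, W (lift c i) = W' i.

Lemma colour_lift P : colour W (lift_pt P) = colour W' P.
Proof. by case: P => i; rewrite /colour /= W_lift. Qed.

Lemma insert_respects d : respects W' d -> respects W (insert_strand d).
Proof.
move=> /respectsP rd; rewrite respectsE; apply/forallP => p.
case: (pt_cases p) => [->|->|[P ->]].
- by rewrite insert_top /colour /=; case: (W c).
- by rewrite insert_bot /colour /=; case: (W c).
- by rewrite insert_lift !colour_lift.
Qed.

Definition restrict (b : diagT n.+1) : diagT n :=
  [ffun P => let q := b (lift_pt P) in
             if unlift c (idx q) is Some i then with_idx q i else P].

Section Restrict.
Variable b : diagT n.+1.
Hypotheses (db : is_diag b) (b_straight : b (inl c) = inr c).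

Lemma lift_restrict P : lift_pt (restrict b P) = b (lift_pt P).
Proof.
have b_straight' : b (inr c) = inl c by rewrite -b_straight diagK.
rewrite ffunE /=; case E: (b (lift_pt P)) => [i|i] /=;
  case: (unliftP c i) => [j ->|Ei] //=; move: E; rewrite Ei.
  by rewrite -b_straight' => /(diag_inj db)/eqP; rewrite lift_pt_bot.
by rewrite -b_straight => /(diag_inj db)/eqP; rewrite lift_pt_top.
Qed.

Lemma restrict_diag : is_diag (restrict b).
Proof.
apply: is_diagP => P; first by apply: lift_pt_inj; rewrite !lift_restrict diagK.
by rewrite -(inj_eq lift_pt_inj) lift_restrict diagN.
Qed.

Lemma insert_restrict : insert_strand (restrict b) = b.
Proof.
apply/ffunP => p; case: (pt_cases p) => [->|->|[P ->]].
- by rewrite insert_top b_straight.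
- by rewrite insert_bot -b_straight diagK.
- by rewrite insert_lift lift_restrict.
Qed.

Lemma restrict_respects : respects W b -> respects W' (restrict b).
Proof.
move=> /respectsP rb; rewrite respectsE; apply/forallP => P.
by rewrite -!colour_lift lift_restrict rb.
Qed.

End Restrict.

End InsertStrand.

Section Straighten.
Variables (m : nat) (c0 c1 : 'I_m).
Hypothesis c01 : c0 != c1.
Local Notation e := (e_d c0 c1).
Let c10 : c1 != c0. Proof. by rewrite eq_sym. Qed.
Let bot1_top0 : inr c1 != inl c0 :> Pt m. Proof. by []. Qed.
Let bot1_top1 : inr c1 != inl c1 :> Pt m. Proof. by []. Qed.

Section Contraction.
Variable a : diagT m.
Hypothesis da : is_diag a.
Local Notation D := (contract c0 c1 a).

Lemma contract_cases p : p != inl c0 -> p != inl c1 ->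
  [\/ a p = inl c0 /\ D p = a (inl c1), a p = inl c1 /\ D p = a (inl c0)
    | [/\ a p != inl c0, a p != inl c1 & D p = a p]].
Proof.
move=> p0 p1; rewrite /contract.
case: (eqVneq (a p) (inl c0)) => [->|E0]; first by rewrite pass_cup0; apply: Or31.
case: (eqVneq (a p) (inl c1)) => [->|E1]; first by rewrite pass_cup1 //; apply: Or32.
by rewrite pass_cup_id //; apply: Or33.
Qed.

Lemma contract_off p : p != inl c0 -> p != inl c1 ->
  (D p != inl c0) && (D p != inl c1).
Proof.
move=> p0 p1; case: (contract_cases p0 p1) => [[E ->]|[E ->]|[E0 E1 ->]].
- rewrite diagN // andbT; apply: contraNneq p1 => E'.
  by apply/eqP/(diag_inj da); rewrite E E'.
- rewrite diagN //=; apply: contraNneq p0 => E'.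
  by apply/eqP/(diag_inj da); rewrite E E'.
- by rewrite E0 E1.
Qed.

Lemma contractK p : p != inl c0 -> p != inl c1 -> D (D p) = p.
Proof.
move=> p0 p1; have /andP[q0 q1] := contract_off p0 p1.
have aK := diagK da.
case: (contract_cases p0 p1) => [[E E']|[E E']|[E0 E1 E']];
  have := contract_cases q0 q1; rewrite E' aK.
- by case=> [[/eqP]|[_ ->]|[_ /eqP]] //; [rewrite inl_eq (negbTE c10) | rewrite -E aK].
- by case=> [[_ ->]|[/eqP]|[/eqP]] //; [rewrite -E aK | rewrite inl_eq (negbTE c01)].
- case=> [[E2 _]|[E2 _]|[_ _ ->]] //.
  + by move/eqP: p0; rewrite E2.
  + by move/eqP: p1; rewrite E2.
Qed.

Lemma contractN p : p != inl c0 -> p != inl c1 -> D p != p.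
Proof.
move=> p0 p1; case: (contract_cases p0 p1) => [[E ->]|[E ->]|[E0 E1 ->]].
- by apply/eqP => E'; move: E; rewrite -E' diagK // => -[] /eqP; rewrite (negbTE c10).
- by apply/eqP => E'; move: E; rewrite -E' diagK // => -[] /eqP; rewrite (negbTE c01).
- exact: diagN.
Qed.

Variable W : pred 'I_m.
Hypothesis W01 : W c0 != W c1.

Lemma bool_neq3 (x y z w : bool) : x != y -> y != z -> z != w -> x != w.
Proof. by case: x; case: y; case: z; case: w. Qed.

Lemma contract_respects : respects W a -> forall p, p != inl c0 -> p != inl c1 ->
  colour W (D p) != colour W p.
Proof.
move=> /respectsP ra p p0 p1.
have cap : colour W (inl c0) != colour W (inl c1).
  by move: W01; rewrite /colour /=; case: (W c0); case: (W c1).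
case: (contract_cases p0 p1) => [[E ->]|[E ->]|[_ _ ->]] //.
- by move: (ra p); rewrite E; apply: bool_neq3 (ra _) _; rewrite eq_sym.
- by move: (ra p); rewrite E; apply: bool_neq3 (ra _) _.
Qed.

End Contraction.

Section Extension.
Variable D : Pt m -> Pt m.
Hypothesis D_off : forall p, p != inl c0 -> p != inl c1 ->
  (D p != inl c0) && (D p != inl c1).
Hypothesis DK : forall p, p != inl c0 -> p != inl c1 -> D (D p) = p.
Hypothesis DN : forall p, p != inl c0 -> p != inl c1 -> D p != p.

(* Given such an involution D, straighten the strand at c1 and join the top
   of c0 to the former D-partner of the bottom of c1. *)
Definition straighten : diagT m := [ffun p =>
  if p == inl c1 then inr c1 else if p == inr c1 then inl c1
  else if p == inl c0 then D (inr c1)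
  else if D p == inr c1 then inl c0 else D p].

Lemma straighten_top1 : straighten (inl c1) = inr c1.
Proof. by rewrite ffunE eqxx. Qed.
Lemma straighten_bot1 : straighten (inr c1) = inl c1.
Proof. by rewrite ffunE eqxx. Qed.
Lemma straighten_top0 : straighten (inl c0) = D (inr c1).
Proof. by rewrite ffunE inl_eq (negbTE c01) eqxx. Qed.
Lemma straighten_other p : p != inl c0 -> p != inl c1 -> p != inr c1 ->
  straighten p = if D p == inr c1 then inl c0 else D p.
Proof. by move=> /negbTE p0 /negbTE p1 /negbTE p2; rewrite ffunE p0 p1 p2. Qed.

Lemma straighten_diag : is_diag straighten.
Proof.
have /andP[t0 t1] := D_off bot1_top0 bot1_top1.
have tN := DN bot1_top0 bot1_top1; have tK := DK bot1_top0 bot1_top1.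
apply: is_diagP => p.
  case: (eqVneq p (inl c1)) => [->|p1]; first by rewrite straighten_top1 straighten_bot1.
  case: (eqVneq p (inr c1)) => [->|p2]; first by rewrite straighten_bot1 straighten_top1.
  case: (eqVneq p (inl c0)) => [->|p0].
    by rewrite straighten_top0 straighten_other // tK eqxx.
  rewrite (straighten_other p0 p1 p2); case: (eqVneq (D p) (inr c1)) => [E|E].
    by rewrite straighten_top0 -E DK.
  have /andP[q0 q1] := D_off p0 p1.
  by rewrite straighten_other // DK // (negbTE p2).
case: (eqVneq p (inl c1)) => [->|p1]; first by rewrite straighten_top1.
case: (eqVneq p (inr c1)) => [->|p2]; first by rewrite straighten_bot1.
case: (eqVneq p (inl c0)) => [->|p0]; first by rewrite straighten_top0.
rewrite (straighten_other p0 p1 p2); case: (eqVneq (D p) (inr c1)) => [E|E].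
  by rewrite eq_sym.
exact: DN.
Qed.

Lemma pass_cup_straighten p : p != inl c0 -> p != inl c1 ->
  pass_cup c0 c1 straighten (straighten p) = D p.
Proof.
move=> p0 p1.
case: (eqVneq p (inr c1)) => [->|p2].
  by rewrite straighten_bot1 pass_cup1 // straighten_top0.
rewrite (straighten_other p0 p1 p2); case: (eqVneq (D p) (inr c1)) => [E|E].
  by rewrite pass_cup0 // straighten_top1.
by have /andP[q0 q1] := D_off p0 p1; rewrite pass_cup_id.
Qed.

Variable W : pred 'I_m.
Hypothesis W01 : W c0 != W c1.
Hypothesis D_col : forall p, p != inl c0 -> p != inl c1 ->
  colour W (D p) != colour W p.

Lemma straighten_respects : respects W straighten.
Proof.
rewrite respectsE; apply/forallP => p.
have col01 : colour W (inl c0) = colour W (inr c1).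
  by move: W01; rewrite /colour /=; case: (W c0); case: (W c1).
case: (eqVneq p (inl c1)) => [->|p1].
  by rewrite straighten_top1 /colour /=; case: (W c1).
case: (eqVneq p (inr c1)) => [->|p2].
  by rewrite straighten_bot1 /colour /=; case: (W c1).
case: (eqVneq p (inl c0)) => [->|p0].
  by rewrite straighten_top0 col01 D_col.
rewrite (straighten_other p0 p1 p2); case: (eqVneq (D p) (inr c1)) => [E|E].
  by rewrite col01 -E D_col.
exact: D_col.
Qed.

End Extension.

Lemma stack_straighten a : is_diag a ->
  stack e (straighten (contract c0 c1 a)) = stack e a.
Proof.
move=> da; have sd := straighten_diag (contract_off da) (contractK da) (contractN da).
apply/ffunP => p; rewrite !stack_e //.
case: ifP => // /negbT p0; case: ifP => // /negbT p1.
by rewrite /contract pass_cup_straighten //; exact: contract_off.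
Qed.

End Straighten.

Section Algebra.
Variables (S : comPzRingType) (delta : S).

Definition supported m (V : pred 'I_m) (x : balg S m) : Prop :=
  forall d, x d != 0 -> is_diag d && respects V d.

Definition insert_alg n (c : 'I_n.+1) (y : balg S n) : balg S n.+1 :=
  [ffun b => \sum_(d | insert_strand c d == b) y d].

Lemma sum_fibres (A B : finType) (g : A -> B) (u : A -> S) (F : B -> S) :
  \sum_b (\sum_(a | g a == b) u a) * F b = \sum_a u a * F (g a).
Proof.
rewrite [RHS](partition_big g predT) //=; apply: eq_bigr => b _.
by rewrite big_distrl; apply: eq_bigr => a /eqP ->.
Qed.

Lemma sum_nonzero (A : finType) (P : pred A) (G : A -> S) :
  \sum_(a | P a) G a != 0 -> exists a, P a && (G a != 0).
Proof.
move=> nz; apply/existsP; apply: contraNT nz => /existsPn H.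
by rewrite big1 // => a Pa; move: (H a); rewrite Pa /= negbK => /eqP.
Qed.

Lemma bmul_e m (c0 c1 : 'I_m) (x : balg S m) : c0 != c1 ->
  in_Brauer x -> bmul delta x (basis S (e_d c0 c1)) =
  [ffun c => \sum_a x a * delta ^+ loops (e_d c0 c1) a
                      * (stack (e_d c0 c1) a == c)%:R].
Proof.
move=> c01 xB; apply/ffunP => c; rewrite !ffunE [RHS](bigID (@is_diag m)) /=.
rewrite [X in _ + X]big1 ?addr0 => [|a /negbTE da]; last first.
  by case: (eqVneq (x a) 0) => [->|/xB]; [rewrite !mul0r | rewrite da].
apply: eq_bigr => a _; rewrite (bigD1 (e_d c0 c1)) ?e_diag //= big1 ?addr0.
  by rewrite ffunE eqxx mulr1.
by move=> b /andP[_ /negbTE nb]; rewrite ffunE nb mulr0 !mul0r.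
Qed.

End Algebra.

Section Factorization.
Variables (n : nat) (c0 c1 : 'I_n.+1) (W : pred 'I_n.+1) (W' : pred 'I_n).
Hypothesis W01 : W c0 != W c1.
Hypothesis W_lift : forall i, W (lift c1 i) = W' i.
Local Notation e := (e_d c0 c1).

Let c01 : c0 != c1. Proof. by apply: contraNneq W01 => ->. Qed.

Definition rep (a : diagT n.+1) : diagT n :=
  restrict c1 (straighten c0 c1 (contract c0 c1 a)).

Lemma rep_spec a : is_diag a -> respects W a ->
  [/\ is_diag (rep a), respects W' (rep a)
    & stack e (insert_strand c1 (rep a)) = stack e a].
Proof.
move=> da ra.
have db := straighten_diag c01 (contract_off c01 da) (contractK c01 da) (contractN c01 da).
have b1 := straighten_top1 c0 c1 (contract c0 c1 a).
have rb := straighten_respects c01 W01 (contract_respects c01 W01 ra).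
split; first exact: restrict_diag.
  exact: (restrict_respects W_lift db b1 rb).
by rewrite insert_restrict // stack_straighten.
Qed.

Variables (S : comPzRingType) (delta : S).

Lemma insert_alg_supported (y : balg S n) :
  supported W' y -> supported W (insert_alg c1 y).
Proof.
move=> hy d; rewrite ffunE => /sum_nonzero [d0 /andP[/eqP <- nz]].
by case/andP: (hy d0 nz) => dd rd; rewrite insert_diag // (insert_respects W_lift).
Qed.

(* B_W e = insert(B_W') e, the coefficient of a diagram d of B_W' collecting
   the loop-weighted coefficients of all a with [rep a = d]. *)
Lemma factor_through_insert z :
  (exists2 x : balg S n.+1, supported W x & z = bmul delta x (basis S e)) <->
  (exists2 y : balg S n, supported W' y &
                 z = bmul delta (insert_alg c1 y) (basis S e)).
Proof.
split => [[x hx ->]|[y hy ->]]; last first.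
  by exists (insert_alg c1 y) => //; exact: insert_alg_supported.
pose L a := delta ^+ loops e a.
pose y : balg S n := [ffun d => \sum_(a | rep a == d) x a * L a].
have hy : supported W' y.
  move=> d; rewrite ffunE => /sum_nonzero [a /andP[/eqP <- nz]].
  have /hx /andP[da ra] : x a != 0 by apply: contraNneq nz => ->; rewrite mul0r.
  by case: (rep_spec da ra) => -> ->.
exists y => //.
have brauer m V (u : balg S m) : supported V u -> in_Brauer u by move=> hu d /hu /andP[].
rewrite !bmul_e //; [| exact: brauer (insert_alg_supported hy) | exact: brauer hx].
apply/ffunP => c; rewrite !ffunE.
under [RHS]eq_bigr => b _ do rewrite ffunE -mulrA.
rewrite sum_fibres.
under [RHS]eq_bigr => d _ do rewrite no_loops ?insert_top // expr0 mul1r ffunE.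
rewrite (sum_fibres rep (fun a => x a * L a)).
apply: eq_bigr => a _.
case: (eqVneq (x a) 0) => [->|/hx /andP[da ra]]; first by rewrite !mul0r.
by case: (rep_spec da ra) => _ _ ->.
Qed.

End Factorization.

Theorem mainTheorem14 (S : comPzRingType) (delta : S) (r s : nat) :
  let e := basis S (e_d (ord0 : 'I_(r + s).+1) ord_max) in
  ((1 <= r)%N ->
    forall z : balg S (r + s).+1,
      (exists2 x : balg S (r + s).+1, in_walled r x & z = bmul delta x e) <->
      (exists2 y : balg S (r + s), in_walled r y &
                     z = bmul delta (iota_alg y) e)) /\
  ((1 <= s)%N ->
    forall z : balg S (r + s).+1,
      (exists2 x : balg S (r + s).+1, in_walled r.+1 x & z = bmul delta x e) <->
      (exists2 y : balg S (r + s), in_walled r y &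
                     z = bmul delta (iota'_alg y) e)).
Proof.
move=> e; split=> [r_pos | s_pos] z.
  have W01 : (@ord0 (r + s) < r)%N != (@ord_max (r + s) < r)%N.
    by rewrite r_pos -leqNgt leq_addr.
  have W_lift (i : 'I_(r + s)) : (lift ord_max i < r)%N = (i < r)%N.
    by rewrite /= /bump (leqNgt _ i) ltn_ord.
  exact: (factor_through_insert (W := fun i : 'I_(r + s).+1 => (i < r)%N) W01 W_lift).
have W01 : (@ord_max (r + s) < r.+1)%N != (@ord0 (r + s) < r.+1)%N.
  by rewrite /= ltnS leqNgt -{1}(addn0 r) ltn_add2l s_pos.
have W_lift (i : 'I_(r + s)) : (lift ord0 i < r.+1)%N = (i < r)%N.
  by rewrite /= /bump leq0n.
have c01 : @ord0 (r + s) != ord_max.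
  by rewrite -val_eqE /= eq_sym -lt0n addn_gt0 s_pos orbT.
rewrite /e (e_sym c01).
exact: (factor_through_insert (W := fun i : 'I_(r + s).+1 => (i < r.+1)%N) W01 W_lift).
Qed.
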